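(* In the Poincaré disk model of $\mathbb{H}^2\times\mathbb{R}=\{(x,y,z):x^2+y^2<1\}$, for $t\in\mathbb{R}$ let $$F_t(x,y,z)=\left(1+\frac{4(x-1)}{4+4ty+t^2((x-1)^2+y^2)},\ \frac{4y+2t((x-1)^2+y^2)}{4+4ty+t^2((x-1)^2+y^2)},\ z\right)$$ (a one-parameter group of isometries whose orbits are horocycles in slices, all asymptotic to $(1,0)\in\mathbb{S}^1_\infty$), and let $\psi(x,y)=\left(\frac{e^x-1}{e^x+1},0,y\right)$ be an isometric parametrization of the vertical plane $\{y=0\}$. Let $\mathcal{I}=(y_1,y_2)$ with $-\infty\le y_1<y_2\le+\infty$ and let $\rho:\mathcal{I}\to\mathbb{R}$ be a smooth function with $\rho''(y)>0$ for all $y\in\mathcal{I}$ and $\lim_{y\to y_1}\rho(y)=\lim_{y\to y_2}\rho(y)=+\infty$. Let $S_\rho$ be the surface parametrized by $f_\rho(y,t)=F_t(\psi(\rho(y),y))$, $y\in\mathcal{I}$, $t\in\mathbb{R}$. Then $S_\rho$ has extrinsic curvature $K=\rho''(y)/(1+\rho'(y)^2)^2>0$, and $S_\rho$ is a properly embedded surface in $\mathbb{H}^2\times\mathbb{R}$ with positive extrinsic curvature and a simple end.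
   Context: $\mathbb{H}^2$ is the Poincaré disk with metric $4(dx^2+dy^2)/(1-x^2-y^2)^2$ and $\mathbb{H}^2\times\mathbb{R}$ carries the product metric; extrinsic curvature $K=\det(II)/\det(I)$. With $\pi$ the vertical projection and $\partial_\infty$ the asymptotic boundary in $\mathbb{S}^1_\infty=\{x^2+y^2=1\}$, a surface $S$ has a simple end if $\partial_\infty\pi(S)$ is a single point $\theta_0$ and, for all $\theta_1,\theta_2\in\mathbb{S}^1_\infty\setminus\{\theta_0\}$, the intersection of $S$ with the vertical plane over the geodesic joining $\theta_1$ and $\theta_2$ is empty or compact. *)

From Stdlib Require Import Reals.
Open Scope R_scope.

Definition P3 : Type := (R * R * R)%type.
Definition c1 (p : P3) : R := fst (fst p).
Definition c2 (p : P3) : R := snd (fst p).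
Definition c3 (p : P3) : R := snd p.
Definition vadd (u w : P3) : P3 := (c1 u + c1 w, c2 u + c2 w, c3 u + c3 w).

Definition H2R (p : P3) : Prop := c1 p ^ 2 + c2 p ^ 2 < 1.

Definition lam2 (p : P3) : R := 4 / (1 - c1 p ^ 2 - c2 p ^ 2) ^ 2.
Definition gm (p : P3) (u w : P3) : R :=
  lam2 p * (c1 u * c1 w + c2 u * c2 w) + c3 u * c3 w.

(** Christoffel term of the Levi-Civita connection of gm:
    (nabla_U W)^k = U(W^k) + Gam p U W ^k.  The metric is conformal
    e^(2 phi)(dx^2+dy^2) + dz^2 with phi = ln (2/(1-x^2-y^2)), so
    Gam^k_ij = delta^k_i d_j phi + delta^k_j d_i phi - delta_ij d_k phi
    (horizontal indices only), d_k phi = 2 x_k / (1 - x^2 - y^2). *)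
Definition dphi1 (p : P3) : R := 2 * c1 p / (1 - c1 p ^ 2 - c2 p ^ 2).
Definition dphi2 (p : P3) : R := 2 * c2 p / (1 - c1 p ^ 2 - c2 p ^ 2).
Definition Gam (p : P3) (u w : P3) : P3 :=
  let ud := c1 u * dphi1 p + c2 u * dphi2 p in
  let wd := c1 w * dphi1 p + c2 w * dphi2 p in
  let uw := c1 u * c1 w + c2 u * c2 w in
  (ud * c1 w + wd * c1 u - uw * dphi1 p,
   ud * c2 w + wd * c2 u - uw * dphi2 p,
   0).

Definition vderiv3 (g : R -> P3) (x : R) (l : P3) : Prop :=
  derivable_pt_lim (fun s => c1 (g s)) x (c1 l) /\
  derivable_pt_lim (fun s => c2 (g s)) x (c2 l) /\
  derivable_pt_lim (fun s => c3 (g s)) x (c3 l).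

(** Fu, Fv, Fuu, Fuv, Fvv are the partial derivatives of f (unique on the open
    domain), N a unit normal (unique up to sign; det II does not depend on the
    sign), II_ij = g(nabla_{f_i} f_j, N). *)
Definition has_extrinsic_curvature (Dom : R -> R -> Prop) (f : R -> R -> P3)
    (K : R -> R -> R) : Prop :=
  exists Fu Fv Fuu Fuv Fvv : R -> R -> P3,
  forall u v, Dom u v ->
    vderiv3 (fun s => f s v) u (Fu u v) /\
    vderiv3 (fun s => f u s) v (Fv u v) /\
    vderiv3 (fun s => Fu s v) u (Fuu u v) /\
    vderiv3 (fun s => Fu u s) v (Fuv u v) /\
    vderiv3 (fun s => Fv u s) v (Fvv u v) /\
    let p := f u v in
    let E := gm p (Fu u v) (Fu u v) in
    let F := gm p (Fu u v) (Fv u v) in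
    let G := gm p (Fv u v) (Fv u v) in
    E * G - F ^ 2 <> 0 /\
    exists N : P3,
      gm p N N = 1 /\ gm p N (Fu u v) = 0 /\ gm p N (Fv u v) = 0 /\
      let L := gm p (vadd (Fuu u v) (Gam p (Fu u v) (Fu u v))) N in
      let M := gm p (vadd (Fuv u v) (Gam p (Fu u v) (Fv u v))) N in
      let Nn := gm p (vadd (Fvv u v) (Gam p (Fv u v) (Fv u v))) N in
      K u v = (L * Nn - M ^ 2) / (E * G - F ^ 2).

Definition cv2 (s : nat -> R * R) (l : R * R) : Prop :=
  Un_cv (fun n => fst (s n)) (fst l) /\ Un_cv (fun n => snd (s n)) (snd l).
Definition cv3 (s : nat -> P3) (l : P3) : Prop :=
  Un_cv (fun n => c1 (s n)) (c1 l) /\ Un_cv (fun n => c2 (s n)) (c2 l) /\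
  Un_cv (fun n => c3 (s n)) (c3 l).
Definition subseq_index (phi : nat -> nat) : Prop :=
  forall n, (phi n < phi (S n))%nat.
Definition compact2 (A : R * R -> Prop) : Prop :=
  forall s : nat -> R * R, (forall n, A (s n)) ->
  exists phi l, subseq_index phi /\ A l /\ cv2 (fun n => s (phi n)) l.
Definition compact3 (A : P3 -> Prop) : Prop :=
  forall s : nat -> P3, (forall n, A (s n)) ->
  exists phi l, subseq_index phi /\ A l /\ cv3 (fun n => s (phi n)) l.

Definition linindep (u w : P3) : Prop :=
  ~ (c2 u * c3 w - c3 u * c2 w = 0 /\ c3 u * c1 w - c1 u * c3 w = 0 /\
     c1 u * c2 w - c2 u * c1 w = 0).

Definition properly_embedded (Dom : R -> R -> Prop) (f : R -> R -> P3) : Prop :=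
  (forall u v, Dom u v -> H2R (f u v)) /\
  (forall u v u' v', Dom u v -> Dom u' v' -> f u v = f u' v' -> u = u' /\ v = v') /\
  (exists Fu Fv : R -> R -> P3, forall u v, Dom u v ->
     vderiv3 (fun s => f s v) u (Fu u v) /\
     vderiv3 (fun s => f u s) v (Fv u v) /\
     linindep (Fu u v) (Fv u v)) /\
  (forall (s : nat -> R * R) (p : R * R),
     (forall n, Dom (fst (s n)) (snd (s n))) -> Dom (fst p) (snd p) ->
     cv3 (fun n => f (fst (s n)) (snd (s n))) (f (fst p) (snd p)) -> cv2 s p) /\
  (forall A : P3 -> Prop, (forall q, A q -> H2R q) -> compact3 A ->
     compact2 (fun p => Dom (fst p) (snd p) /\ A (f (fst p) (snd p)))).

Definition on_circle (th : R * R) : Prop := fst th ^ 2 + snd th ^ 2 = 1.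

Definition asym_boundary (A : R * R -> Prop) (th : R * R) : Prop :=
  on_circle th /\ exists s : nat -> R * R, (forall n, A (s n)) /\ cv2 s th.

(** The geodesic of the disk joining distinct a, b in S^1_infty:
    the generalized circle orthogonal to S^1 through a and b, i.e.
    cross(a,b) (|p|^2 + 1) = 2 p . J(a - b), J(w1,w2) = (-w2,w1)
    (for antipodal a,b this is the diameter). *)
Definition geodesic (a b : R * R) (p : R * R) : Prop :=
  fst p ^ 2 + snd p ^ 2 < 1 /\
  (fst a * snd b - snd a * fst b) * (fst p ^ 2 + snd p ^ 2 + 1) =
  2 * (- fst p * (snd a - snd b) + snd p * (fst a - fst b)).

Definition vplane (a b : R * R) (q : P3) : Prop := geodesic a b (c1 q, c2 q).

Definition image (Dom : R -> R -> Prop) (f : R -> R -> P3) (q : P3) : Prop :=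
  exists u v, Dom u v /\ f u v = q.

Definition simple_end (Dom : R -> R -> Prop) (f : R -> R -> P3) : Prop :=
  exists th0 : R * R,
    (forall th, asym_boundary (fun p => exists q, image Dom f q /\ (c1 q, c2 q) = p) th
                <-> th = th0) /\
    forall th1 th2, on_circle th1 -> on_circle th2 ->
      th1 <> th0 -> th2 <> th0 -> th1 <> th2 ->
      (forall q, ~ (image Dom f q /\ vplane th1 th2 q)) \/
      compact3 (fun q => image Dom f q /\ vplane th1 th2 q).

Definition Ft (t : R) (p : P3) : P3 :=
  let x := c1 p in let y := c2 p in
  let d := 4 + 4 * t * y + t ^ 2 * ((x - 1) ^ 2 + y ^ 2) in
  (1 + 4 * (x - 1) / d, (4 * y + 2 * t * ((x - 1) ^ 2 + y ^ 2)) / d, c3 p).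

Definition psi (x y : R) : P3 := ((exp x - 1) / (exp x + 1), 0, y).

Definition f_rho (rho : R -> R) (y t : R) : P3 := Ft t (psi (rho y) y).

(** Interval (y1,y2) with y1 in R u {-oo} (None = -oo), y2 in R u {+oo}
    (None = +oo). *)
Definition in_I (y1 y2 : option R) (y : R) : Prop :=
  (match y1 with Some a => a < y | None => True end) /\
  (match y2 with Some b => y < b | None => True end).
Definition ext_lt (y1 y2 : option R) : Prop :=
  match y1, y2 with Some a, Some b => a < b | _, _ => True end.

Definition tends_infty_left (y1 y2 : option R) (rho : R -> R) : Prop :=
  forall M : R,
    match y1 with
    | Some a => exists d, 0 < d /\ forall y, in_I y1 y2 y -> y < a + d -> M < rho y
    | None => exists N, forall y, in_I y1 y2 y -> y < N -> M < rho y
    end.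
Definition tends_infty_right (y1 y2 : option R) (rho : R -> R) : Prop :=
  forall M : R,
    match y2 with
    | Some b => exists d, 0 < d /\ forall y, in_I y1 y2 y -> b - d < y -> M < rho y
    | None => exists N, forall y, in_I y1 y2 y -> N < y -> M < rho y
    end.

(* The coordinates [(e, t)] of [uhp] identify the disk with the upper half-plane
   [e > 0] carrying the metric [(de^2 + dt^2) / e^2]: the point [(1, 0)] goes to
   infinity, the horocycles at [(1, 0)] become the lines [e = const] and [F_t] the
   translation by [t].  There the surface is [f_rho y t = uhp (exp (rho y)) t y], so
   its fundamental forms are explicit ([E = 1 + rho'^2], [F = 0], [G = 1/e^2];
   [L = rho''], [M = 0], [N = 1/e^2] for a normal of length [sqrt (1 + rho'^2)]) and
   the parameters [(y, t)] are continuous functions of the point.  Since [rho -> +oo] at both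
   ends of the interval, bounded [e] confines [y] to a compact subinterval, which
   gives properness.  A vertical plane over a geodesic not ending at [(1, 0)] is a
   half-circle in the half-plane, hence meets the surface in a compact set; and
   [e >= exp (min rho) > 0] on the surface, so its only point at infinity is [(1, 0)]. *)

From Stdlib Require Import Reals Lra Lia FunctionalExtensionality IndefiniteDescription.
From Coquelicot Require Import Coquelicot.
Open Scope R_scope.

Ltac unfold_coords := unfold c1, c2, c3 in *; cbn [fst snd] in *.

(* [uhp_x + i uhp_y = 1 - 2 / w] with [w = (e + 1) + i t]: a Moebius map sending
   the upper half-plane [e > 0] onto the disk and [e = +oo] to [(1, 0)].  Its
   e-derivatives are those of [1 - 2 / w], namely [2 / w^2] and [-4 / w^3], with
   [uhp_a + i uhp_b = w^2]; being holomorphic, it satisfies [d/dt = i d/de]. *)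
Definition uhp_r (e t : R) : R := (e + 1) ^ 2 + t ^ 2.
Definition uhp_x (e t : R) : R := 1 - 2 * (e + 1) / uhp_r e t.
Definition uhp_y (e t : R) : R := 2 * t / uhp_r e t.
Definition uhp (e t z : R) : P3 := (uhp_x e t, uhp_y e t, z).

Definition uhp_a (e t : R) : R := (e + 1) ^ 2 - t ^ 2.
Definition uhp_b (e t : R) : R := 2 * t * (e + 1).
Definition uhp_x_e (e t : R) : R := 2 * uhp_a e t / uhp_r e t ^ 2.
Definition uhp_y_e (e t : R) : R := - 2 * uhp_b e t / uhp_r e t ^ 2.
Definition uhp_x_ee (e t : R) : R :=
  - 4 * ((e + 1) * uhp_a e t - t * uhp_b e t) / uhp_r e t ^ 3.
Definition uhp_y_ee (e t : R) : R :=
  4 * ((e + 1) * uhp_b e t + t * uhp_a e t) / uhp_r e t ^ 3.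

Lemma uhp_r_pos e t : 0 < e -> 0 < uhp_r e t.
Proof. intros; unfold uhp_r; nra. Qed.

Lemma f_rho_uhp rho : f_rho rho = fun y t => uhp (exp (rho y)) t y.
Proof.
  extensionality y; extensionality t.
  pose proof (exp_pos (rho y)).
  unfold f_rho, Ft, psi, uhp, uhp_x, uhp_y, uhp_r; unfold_coords.
  f_equal; f_equal; field; split; nra.
Qed.

Lemma uhp_disk_factor e t : 0 < e ->
  1 - uhp_x e t ^ 2 - uhp_y e t ^ 2 = 4 * e / uhp_r e t.
Proof. intros He; pose proof (uhp_r_pos e t He); unfold uhp_x, uhp_y, uhp_r in *; field; lra. Qed.

Lemma uhp_in_disk e t z : 0 < e -> H2R (uhp e t z).
Proof.
  intros He; unfold H2R, uhp; unfold_coords.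
  pose proof (uhp_disk_factor e t He); pose proof (uhp_r_pos e t He).
  assert (0 < 4 * e / uhp_r e t) by (apply Rdiv_lt_0_compat; lra); lra.
Qed.

Definition disk_den (X Y : R) : R := (1 - X) ^ 2 + Y ^ 2.
Definition uhp_e_of (X Y : R) : R := 2 * (1 - X) / disk_den X Y - 1.
Definition uhp_t_of (X Y : R) : R := 2 * Y / disk_den X Y.

Lemma disk_den_uhp e t : 0 < e -> disk_den (uhp_x e t) (uhp_y e t) = 4 / uhp_r e t.
Proof. intros He; pose proof (uhp_r_pos e t He); unfold disk_den, uhp_x, uhp_y, uhp_r in *; field; lra. Qed.

Lemma uhp_e_of_uhp e t : 0 < e -> uhp_e_of (uhp_x e t) (uhp_y e t) = e.
Proof.
  intros He; pose proof (uhp_r_pos e t He); unfold uhp_e_of; rewrite disk_den_uhp by exact He.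
  unfold uhp_x, uhp_r in *; field; lra.
Qed.

Lemma uhp_t_of_uhp e t : 0 < e -> uhp_t_of (uhp_x e t) (uhp_y e t) = t.
Proof.
  intros He; pose proof (uhp_r_pos e t He); unfold uhp_t_of; rewrite disk_den_uhp by exact He.
  unfold uhp_y, uhp_r in *; field; lra.
Qed.

Lemma disk_den_pos X Y : X ^ 2 + Y ^ 2 < 1 -> 0 < disk_den X Y.
Proof. intros; unfold disk_den; assert (X < 1) by nra; nra. Qed.

Lemma uhp_e_of_circle X Y : X ^ 2 + Y ^ 2 = 1 -> X <> 1 ->
  disk_den X Y <> 0 /\ uhp_e_of X Y = 0.
Proof.
  intros HXY HX; assert (Hd : disk_den X Y = 2 - 2 * X) by (unfold disk_den; nra).
  unfold uhp_e_of; rewrite Hd; split; [lra | field; lra].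
Qed.

Lemma lam2_uhp e t z : 0 < e -> lam2 (uhp e t z) = uhp_r e t ^ 2 / (4 * e ^ 2).
Proof.
  intros He; pose proof (uhp_r_pos e t He).
  unfold lam2, uhp; unfold_coords; rewrite uhp_disk_factor by exact He; field; lra.
Qed.

Lemma dphi1_uhp e t z : 0 < e -> dphi1 (uhp e t z) = (uhp_r e t - 2 * (e + 1)) / (2 * e).
Proof.
  intros He; pose proof (uhp_r_pos e t He).
  unfold dphi1, uhp; unfold_coords; rewrite uhp_disk_factor by exact He.
  unfold uhp_x; field; lra.
Qed.

Lemma dphi2_uhp e t z : 0 < e -> dphi2 (uhp e t z) = t / e.
Proof.
  intros He; pose proof (uhp_r_pos e t He).
  unfold dphi2, uhp; unfold_coords; rewrite uhp_disk_factor by exact He.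
  unfold uhp_y; field; lra.
Qed.

Ltac uhp_derive :=
  intros; apply is_derive_Reals; auto_derive;
  [ unfold uhp_r in *; repeat split; nra
  | unfold uhp_x, uhp_y, uhp_x_e, uhp_y_e, uhp_x_ee, uhp_y_ee, uhp_a, uhp_b, uhp_r in *;
    field; nra ].

Lemma uhp_x_derive_e e t : 0 < e -> derivable_pt_lim (fun s => uhp_x s t) e (uhp_x_e e t).
Proof. unfold uhp_x, uhp_r; uhp_derive. Qed.
Lemma uhp_y_derive_e e t : 0 < e -> derivable_pt_lim (fun s => uhp_y s t) e (uhp_y_e e t).
Proof. unfold uhp_y, uhp_r; uhp_derive. Qed.
Lemma uhp_x_derive_t e t : 0 < e -> derivable_pt_lim (fun s => uhp_x e s) t (- uhp_y_e e t).
Proof. unfold uhp_x, uhp_r; uhp_derive. Qed.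
Lemma uhp_y_derive_t e t : 0 < e -> derivable_pt_lim (fun s => uhp_y e s) t (uhp_x_e e t).
Proof. unfold uhp_y, uhp_r; uhp_derive. Qed.
Lemma uhp_x_e_derive_e e t : 0 < e -> derivable_pt_lim (fun s => uhp_x_e s t) e (uhp_x_ee e t).
Proof. unfold uhp_x_e, uhp_a, uhp_r; uhp_derive. Qed.
Lemma uhp_y_e_derive_e e t : 0 < e -> derivable_pt_lim (fun s => uhp_y_e s t) e (uhp_y_ee e t).
Proof. unfold uhp_y_e, uhp_b, uhp_r; uhp_derive. Qed.
Lemma uhp_x_e_derive_t e t : 0 < e -> derivable_pt_lim (fun s => uhp_x_e e s) t (- uhp_y_ee e t).
Proof. unfold uhp_x_e, uhp_a, uhp_r; uhp_derive. Qed.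
Lemma uhp_y_e_derive_t e t : 0 < e -> derivable_pt_lim (fun s => uhp_y_e e s) t (uhp_x_ee e t).
Proof. unfold uhp_y_e, uhp_b, uhp_r; uhp_derive. Qed.

Lemma uhp_e_speed e t : 0 < e -> uhp_x_e e t ^ 2 + uhp_y_e e t ^ 2 = 4 / uhp_r e t ^ 2.
Proof.
  intros He; pose proof (uhp_r_pos e t He).
  unfold uhp_x_e, uhp_y_e, uhp_a, uhp_b, uhp_r in *; field; lra.
Qed.

(* Partial derivatives of [(y, t) |-> uhp (exp (rho y)) t y] and a normal to it,
   at [e = exp (rho y)], [d1 = rho' y], [d2 = rho'' y]. *)
Definition f_y (e t d1 : R) : P3 := (e * d1 * uhp_x_e e t, e * d1 * uhp_y_e e t, 1).
Definition f_t (e t : R) : P3 := (- uhp_y_e e t, uhp_x_e e t, 0).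
Definition f_yy (e t d1 d2 : R) : P3 :=
  ((e * d1) ^ 2 * uhp_x_ee e t + e * (d1 ^ 2 + d2) * uhp_x_e e t,
   (e * d1) ^ 2 * uhp_y_ee e t + e * (d1 ^ 2 + d2) * uhp_y_e e t, 0).
Definition f_yt (e t d1 : R) : P3 := (- (e * d1 * uhp_y_ee e t), e * d1 * uhp_x_ee e t, 0).
Definition f_tt (e t : R) : P3 := (- uhp_x_ee e t, - uhp_y_ee e t, 0).
Definition f_normal (e t d1 : R) : P3 := (e * uhp_x_e e t, e * uhp_y_e e t, - d1).

Lemma linindep_f_y_f_t e t d1 : 0 < e -> linindep (f_y e t d1) (f_t e t).
Proof.
  intros He [Hx [Hy _]]; unfold f_y, f_t in *; unfold_coords.
  pose proof (uhp_e_speed e t He); pose proof (uhp_r_pos e t He).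
  assert (0 < 4 / uhp_r e t ^ 2) by (apply Rdiv_lt_0_compat; [lra | apply pow_lt; lra]).
  assert (uhp_x_e e t = 0) by lra; assert (uhp_y_e e t = 0) by lra; nra.
Qed.

Definition scale3 (k : R) (u : P3) : P3 := (k * c1 u, k * c2 u, k * c3 u).

Lemma gm_scale_l p k u w : gm p (scale3 k u) w = k * gm p u w.
Proof. unfold gm, scale3; unfold_coords; ring. Qed.
Lemma gm_scale_r p k u w : gm p u (scale3 k w) = k * gm p u w.
Proof. unfold gm, scale3; unfold_coords; ring. Qed.

Ltac uhp_metric e t He :=
  let Hr := fresh in
  pose proof (uhp_r_pos e t He) as Hr;
  unfold gm, Gam, vadd, f_y, f_t, f_yy, f_yt, f_tt, f_normal; unfold_coords;
  rewrite ?lam2_uhp, ?dphi1_uhp, ?dphi2_uhp by exact He;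
  unfold uhp_x_e, uhp_y_e, uhp_x_ee, uhp_y_ee, uhp_a, uhp_b, uhp_r in *;
  field; lra.

Section FundamentalForms.
Variables (e t z d1 d2 : R).
Hypothesis He : 0 < e.
Notation p := (uhp e t z).

Lemma first_form_E : gm p (f_y e t d1) (f_y e t d1) = 1 + d1 ^ 2.
Proof. uhp_metric e t He. Qed.
Lemma first_form_F : gm p (f_y e t d1) (f_t e t) = 0.
Proof. uhp_metric e t He. Qed.
Lemma first_form_G : gm p (f_t e t) (f_t e t) = 1 / e ^ 2.
Proof. uhp_metric e t He. Qed.
Lemma gm_f_normal : gm p (f_normal e t d1) (f_normal e t d1) = 1 + d1 ^ 2.
Proof. uhp_metric e t He. Qed.
Lemma f_normal_orth_y : gm p (f_normal e t d1) (f_y e t d1) = 0.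
Proof. uhp_metric e t He. Qed.
Lemma f_normal_orth_t : gm p (f_normal e t d1) (f_t e t) = 0.
Proof. uhp_metric e t He. Qed.
Lemma second_form_L :
  gm p (vadd (f_yy e t d1 d2) (Gam p (f_y e t d1) (f_y e t d1))) (f_normal e t d1) = d2.
Proof. uhp_metric e t He. Qed.
Lemma second_form_M :
  gm p (vadd (f_yt e t d1) (Gam p (f_y e t d1) (f_t e t))) (f_normal e t d1) = 0.
Proof. uhp_metric e t He. Qed.
Lemma second_form_N :
  gm p (vadd (f_tt e t) (Gam p (f_t e t) (f_t e t))) (f_normal e t d1) = 1 / e ^ 2.
Proof. uhp_metric e t He. Qed.

End FundamentalForms.

Lemma is_lim_seq_pow2 (u : nat -> R) (l : R) :
  is_lim_seq u l -> is_lim_seq (fun n => u n ^ 2) (l ^ 2).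
Proof.
  intros Hu; apply (is_lim_seq_continuous (fun x => x ^ 2)); auto.
  apply derivable_continuous_pt, derivable_pt_pow.
Qed.

Lemma is_lim_seq_opp_R (u : nat -> R) (l : R) :
  is_lim_seq u l -> is_lim_seq (fun n => - u n) (- l).
Proof. intros Hu; apply (is_lim_seq_opp u l) in Hu; exact Hu. Qed.

Ltac is_lim_seq_arith := repeat match goal with
  | |- is_lim_seq (fun n => _ / _) _ => apply is_lim_seq_div'
  | |- is_lim_seq (fun n => _ - _) _ => apply is_lim_seq_minus'
  | |- is_lim_seq (fun n => _ + _) _ => apply is_lim_seq_plus'
  | |- is_lim_seq (fun n => _ * _) _ => apply is_lim_seq_mult'
  | |- is_lim_seq (fun n => _ ^ 2) _ => apply is_lim_seq_pow2
  | |- is_lim_seq (fun n => - _) _ => apply is_lim_seq_opp_R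
  | |- is_lim_seq (fun n => ?c) _ => apply is_lim_seq_const
  | |- is_lim_seq _ _ => eassumption
  end.

Lemma cv3_is_lim_seq (q : nat -> P3) (l : P3) : cv3 q l <->
  is_lim_seq (fun n => c1 (q n)) (c1 l) /\ is_lim_seq (fun n => c2 (q n)) (c2 l) /\
  is_lim_seq (fun n => c3 (q n)) (c3 l).
Proof. unfold cv3; rewrite !is_lim_seq_Reals; tauto. Qed.

Lemma cv2_is_lim_seq (s : nat -> R * R) (l : R * R) : cv2 s l <->
  is_lim_seq (fun n => fst (s n)) (fst l) /\ is_lim_seq (fun n => snd (s n)) (snd l).
Proof. unfold cv2; rewrite !is_lim_seq_Reals; tauto. Qed.

Lemma is_lim_seq_unique_R (u : nat -> R) (l l' : R) :
  is_lim_seq u l -> is_lim_seq u l' -> l = l'.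
Proof.
  intros H H'; apply is_lim_seq_unique in H; apply is_lim_seq_unique in H'.
  rewrite H in H'; injection H'; auto.
Qed.

Lemma cv3_unique (q : nat -> P3) (l l' : P3) : cv3 q l -> cv3 q l' -> l = l'.
Proof.
  rewrite !cv3_is_lim_seq; intros [H1 [H2 H3]] [H1' [H2' H3']].
  destruct l as [[l1 l2] l3], l' as [[l1' l2'] l3']; unfold_coords.
  rewrite (is_lim_seq_unique_R _ _ _ H1 H1'), (is_lim_seq_unique_R _ _ _ H2 H2'),
    (is_lim_seq_unique_R _ _ _ H3 H3'); reflexivity.
Qed.

Section UhpContinuity.
Variables (en tn : nat -> R) (e t : R).
Hypotheses (He : is_lim_seq en e) (Ht : is_lim_seq tn t).

Lemma is_lim_seq_uhp_x : 0 < e -> is_lim_seq (fun n => uhp_x (en n) (tn n)) (uhp_x e t).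
Proof.
  intros Hpos; pose proof (uhp_r_pos e t Hpos).
  unfold uhp_x, uhp_r in *; is_lim_seq_arith; lra.
Qed.

Lemma is_lim_seq_uhp_y : 0 < e -> is_lim_seq (fun n => uhp_y (en n) (tn n)) (uhp_y e t).
Proof.
  intros Hpos; pose proof (uhp_r_pos e t Hpos).
  unfold uhp_y, uhp_r in *; is_lim_seq_arith; lra.
Qed.

End UhpContinuity.

Section UhpInverseContinuity.
Variables (xn yn : nat -> R) (X Y : R).
Hypotheses (HX : is_lim_seq xn X) (HY : is_lim_seq yn Y) (Hden : disk_den X Y <> 0).

Lemma is_lim_seq_uhp_e_of : is_lim_seq (fun n => uhp_e_of (xn n) (yn n)) (uhp_e_of X Y).
Proof. unfold uhp_e_of, disk_den in *; is_lim_seq_arith; exact Hden. Qed.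

Lemma is_lim_seq_uhp_t_of : is_lim_seq (fun n => uhp_t_of (xn n) (yn n)) (uhp_t_of X Y).
Proof. unfold uhp_t_of, disk_den in *; is_lim_seq_arith; exact Hden. Qed.

End UhpInverseContinuity.

Lemma is_lim_seq_of_dist_bound (v : nat -> R) (l C : R) :
  (forall n, Rabs (v n - l) <= C / INR (S n)) -> is_lim_seq v l.
Proof.
  intros Hv.
  assert (Hbound : is_lim_seq (fun n => C / INR (S n)) 0).
  { assert (Hinv : is_lim_seq (fun n => / INR (S n)) 0).
    { change (Finite 0) with (Rbar_inv p_infty).
      apply is_lim_seq_inv; [| easy].
      apply (is_lim_seq_incr_1 INR p_infty), is_lim_seq_INR. }
    replace 0 with (C * 0) by ring.
    apply is_lim_seq_mult'; [apply is_lim_seq_const | exact Hinv]. }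
  assert (Hdist : is_lim_seq (fun n => v n - l) 0).
  { apply is_lim_seq_abs_0, (is_lim_seq_le_le (fun _ => 0) _ (fun n => C / INR (S n)) 0); auto.
    - intro n; split; [apply Rabs_pos | apply Hv].
    - apply is_lim_seq_const. }
  replace (Finite l) with (Rbar_plus 0 l) by (simpl; f_equal; ring).
  apply (is_lim_seq_ext (fun n => (v n - l) + l)); [intro n; ring |].
  apply is_lim_seq_plus'; [exact Hdist | apply is_lim_seq_const].
Qed.

Lemma subseq_index_lt phi : subseq_index phi ->
  forall m n, (m < n)%nat -> (phi m < phi n)%nat.
Proof. intros Hphi m n Hmn; induction Hmn; [apply Hphi | specialize (Hphi m0); lia]. Qed.

Lemma subseq_index_comp phi psi :
  subseq_index phi -> subseq_index psi -> subseq_index (fun n => phi (psi n)).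
Proof. intros Hphi Hpsi n; apply subseq_index_lt, Hpsi; exact Hphi. Qed.

Lemma is_lim_seq_subseq_index (u : nat -> R) (l : R) phi :
  subseq_index phi -> is_lim_seq u l -> is_lim_seq (fun n => u (phi n)) l.
Proof. intros Hphi Hu; apply (is_lim_seq_subseq u l phi); [apply eventually_subseq |]; auto. Qed.

Fixpoint subseq_build (g : nat -> nat -> nat) (n : nat) : nat :=
  match n with O => g O O | S m => g (S m) (S (subseq_build g m)) end.

Lemma cluster_point_subseq (u : nat -> R) (l : R) : ValAdh u l ->
  exists phi, subseq_index phi /\ is_lim_seq (fun n => u (phi n)) l.
Proof.
  intros Hl.
  assert (Hnext : forall kN : nat * nat, exists p,
            (snd kN <= p)%nat /\ Rabs (u p - l) <= 1 / INR (S (fst kN))).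
  { intros [k N]; assert (Hk : 0 < / INR (S k)) by (apply Rinv_0_lt_compat, lt_0_INR; lia).
    destruct (Hl (disc l (mkposreal _ Hk)) N) as [p [HNp Hp]].
    - exists (mkposreal _ Hk); intros z Hz; exact Hz.
    - exists p; split; [exact HNp |]; unfold disc in Hp; cbn [fst snd pos] in *; unfold Rdiv; lra. }
  destruct (functional_choice _ Hnext) as [g Hg].
  exists (subseq_build (fun k N => g (k, N))); split.
  - intro n; destruct (Hg (S n, S (subseq_build (fun k N => g (k, N)) n))) as [Hle _]; simpl in *; lia.
  - apply (is_lim_seq_of_dist_bound _ _ 1); intros [|n]; apply Hg.
Qed.

Lemma bounded_subseq_cv (u : nat -> R) (a b : R) : (forall n, a <= u n <= b) ->
  exists phi (l : R), subseq_index phi /\ is_lim_seq (fun n => u (phi n)) l.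
Proof.
  intros Hb.
  destruct (Bolzano_Weierstrass u (fun x => a <= x <= b) (compact_P3 a b) Hb) as [l Hl].
  destruct (cluster_point_subseq u l Hl) as [phi Hphi]; exists phi, l; exact Hphi.
Qed.

Lemma bounded_subseq_cv2 (u v : nat -> R) (a b c d : R) :
  (forall n, a <= u n <= b) -> (forall n, c <= v n <= d) ->
  exists phi (l1 l2 : R), subseq_index phi /\
    is_lim_seq (fun n => u (phi n)) l1 /\ is_lim_seq (fun n => v (phi n)) l2.
Proof.
  intros Hu Hv.
  destruct (bounded_subseq_cv u a b Hu) as [phi [l1 [Hphi Hu']]].
  destruct (bounded_subseq_cv (fun n => v (phi n)) c d) as [psi [l2 [Hpsi Hv']]];
    [intro n; apply Hv |].
  exists (fun n => phi (psi n)), l1, l2; repeat split; auto.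
  - apply subseq_index_comp; auto.
  - apply (is_lim_seq_subseq_index (fun n => u (phi n))); auto.
Qed.

Lemma unit_circle_not_collinear a1 a2 b1 b2 :
  a1 ^ 2 + a2 ^ 2 = 1 -> b1 ^ 2 + b2 ^ 2 = 1 ->
  (a1, a2) <> (1, 0) -> (b1, b2) <> (1, 0) -> (a1, a2) <> (b1, b2) ->
  (a1 - 1) * b2 - a2 * (b1 - 1) <> 0.
Proof.
  intros Ha Hb Ha0 Hb0 Hab Hdet.
  set (u1 := a1 - 1) in Hdet; set (u2 := a2) in Hdet; set (v1 := b1 - 1) in Hdet;
  set (v2 := b2) in Hdet.
  assert (Hu : 2 * u1 + (u1 ^ 2 + u2 ^ 2) = 0) by (unfold u1, u2; nra).
  assert (Hv : 2 * v1 + (v1 ^ 2 + v2 ^ 2) = 0) by (unfold v1, v2; nra).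
  assert (Hun : u1 ^ 2 + u2 ^ 2 <> 0).
  { intro H0; assert (u1 = 0) by nra; assert (u2 = 0) by nra.
    apply Ha0; unfold u1, u2 in *; f_equal; lra. }
  (* [v = mu u] by collinearity, and both ends on the circle force [mu = mu^2]. *)
  set (mu := (u1 * v1 + u2 * v2) / (u1 ^ 2 + u2 ^ 2)).
  assert (Hv1 : v1 = mu * u1).
  { unfold mu; apply Rmult_eq_reg_r with (u1 ^ 2 + u2 ^ 2); auto.
    field_simplify; auto.
    replace (v1 * u1 ^ 2 + v1 * u2 ^ 2) with (u1 * v1 * u1 + u2 * v2 * u1 - u2 * (u1 * v2 - u2 * v1))
      by ring; rewrite Hdet; ring. }
  assert (Hv2 : v2 = mu * u2).
  { unfold mu; apply Rmult_eq_reg_r with (u1 ^ 2 + u2 ^ 2); auto.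
    field_simplify; auto.
    replace (v2 * u1 ^ 2 + v2 * u2 ^ 2) with (u1 * v1 * u2 + u2 * v2 * u2 + u1 * (u1 * v2 - u2 * v1))
      by ring; rewrite Hdet; ring. }
  rewrite Hv1, Hv2 in Hv.
  assert (Hmu : mu * (mu - 1) = 0).
  { apply Rmult_eq_reg_r with (u1 ^ 2 + u2 ^ 2); auto; nra. }
  destruct (Rmult_integral _ _ Hmu) as [Hm0 | Hm1].
  - apply Hb0; rewrite Hm0 in Hv1, Hv2; unfold v1, v2 in *; f_equal; lra.
  - apply Hab; replace mu with 1 in Hv1, Hv2 by lra; unfold u1, u2, v1, v2 in *; f_equal; lra.
Qed.

Lemma circle_bounded (Phi a b c S T : R) : Phi <> 0 -> 0 <= S ->
  Phi * (S ^ 2 + T ^ 2) = a * S + b * T + c ->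
  S <= 2 * ((Rabs a + Rabs b + Rabs c) / Rabs Phi) + 1 /\
  Rabs T <= 2 * ((Rabs a + Rabs b + Rabs c) / Rabs Phi) + 1.
Proof.
  intros HPhi HS Heq.
  set (K := (Rabs a + Rabs b + Rabs c) / Rabs Phi).
  assert (HPhi' : 0 < Rabs Phi) by (apply Rabs_pos_lt; exact HPhi).
  pose proof (Rabs_pos a); pose proof (Rabs_pos b); pose proof (Rabs_pos c); pose proof (Rabs_pos T).
  assert (HK : 0 <= K) by (apply Rdiv_le_0_compat; lra).
  assert (Hsq : S ^ 2 + Rabs T ^ 2 <= K * (1 + S + Rabs T)).
  { assert (Hlhs : Rabs Phi * (S ^ 2 + Rabs T ^ 2) = Rabs (a * S + b * T + c)).
    { rewrite <- Heq, Rabs_mult, pow2_abs, (Rabs_right (S ^ 2 + T ^ 2)) by nra; reflexivity. }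
    assert (Htri : Rabs (a * S + b * T + c) <= Rabs a * S + Rabs b * Rabs T + Rabs c).
    { rewrite <- (Rabs_right S) at 2 by lra; rewrite <- !Rabs_mult.
      pose proof (Rabs_triang (a * S + b * T) c); pose proof (Rabs_triang (a * S) (b * T)); lra. }
    unfold K; apply Rmult_le_reg_l with (Rabs Phi); [exact HPhi' |].
    replace (Rabs Phi * ((Rabs a + Rabs b + Rabs c) / Rabs Phi * (1 + S + Rabs T)))
      with ((Rabs a + Rabs b + Rabs c) * (1 + S + Rabs T)) by (field; lra).
    nra. }
  (* If the larger of [S] and [|T|] exceeded [2 K + 1], its square would exceed
     [K (1 + S + |T|)]. *)
  split; apply Rnot_lt_le; intro Hbig.
  - assert (0 < (S - K / 2 - K - 1) * (S - K / 2 + K + 1)) by (apply Rmult_lt_0_compat; lra).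
    destruct (Rle_lt_dec (Rabs T) S); nra.
  - assert (0 < (Rabs T - K / 2 - K - 1) * (Rabs T - K / 2 + K + 1))
      by (apply Rmult_lt_0_compat; lra).
    destruct (Rle_lt_dec S (Rabs T)); nra.
Qed.

Lemma uhp_geodesic_circle e t k p q : 0 < e ->
  k * (uhp_x e t ^ 2 + uhp_y e t ^ 2 + 1) = 2 * (- uhp_x e t * p + uhp_y e t * q) ->
  (2 * k + 2 * p) * ((e + 1) ^ 2 + t ^ 2) = (4 * k + 4 * p) * (e + 1) + 4 * q * t - 4 * k.
Proof.
  intros He Hgeo; pose proof (uhp_r_pos e t He) as Hr.
  apply Rmult_eq_reg_r with (/ uhp_r e t); [| apply Rinv_neq_0_compat; lra].
  apply Rminus_diag_uniq; apply Rminus_diag_eq in Hgeo.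
  rewrite <- Hgeo; unfold uhp_x, uhp_y, uhp_r in *; field; lra.
Qed.

(* In the half-plane a geodesic not ending at [(1, 0)] is a half-circle, hence bounded. *)
Lemma vplane_uhp_bounded th1 th2 : on_circle th1 -> on_circle th2 ->
  th1 <> (1, 0) -> th2 <> (1, 0) -> th1 <> th2 ->
  exists B, forall e t z, 0 < e -> vplane th1 th2 (uhp e t z) -> e + 1 <= B /\ Rabs t <= B.
Proof.
  destruct th1 as [a1 a2], th2 as [b1 b2]; unfold on_circle; simpl; intros Ha Hb Ha0 Hb0 Hab.
  set (k := a1 * b2 - a2 * b1); set (p := a2 - b2); set (q := a1 - b1).
  assert (HPhi : 2 * k + 2 * p <> 0).
  { pose proof (unit_circle_not_collinear a1 a2 b1 b2 Ha Hb Ha0 Hb0 Hab); unfold k, p; lra. }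
  eexists; intros e t z He [_ Hgeo]; simpl in Hgeo.
  apply (circle_bounded (2 * k + 2 * p) (4 * k + 4 * p) (4 * q) (- 4 * k)); [exact HPhi | lra |].
  rewrite (uhp_geodesic_circle e t k p q He Hgeo); ring.
Qed.

Lemma horocycle_tends_to_end e : 0 < e ->
  is_lim_seq (fun n => uhp_x e (INR n)) 1 /\ is_lim_seq (fun n => uhp_y e (INR n)) 0.
Proof.
  intros He.
  assert (Hfrac : forall u v w, 0 < v -> 0 < w -> 0 <= u -> u * w <= 4 * (e + 1) * v ->
            Rabs (u / v) <= 4 * (e + 1) / w).
  { intros u v w Hv Hw Hu Huw; rewrite Rabs_right by (apply Rle_ge, Rdiv_le_0_compat; lra).
    apply Rmult_le_reg_r with (v * w); [nra |].
    replace (u / v * (v * w)) with (u * w) by (field; lra).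
    replace (4 * (e + 1) / w * (v * w)) with (4 * (e + 1) * v) by (field; lra); exact Huw. }
  split; apply (is_lim_seq_of_dist_bound _ _ (4 * (e + 1))); intro n;
    pose proof (pos_INR n); rewrite S_INR; pose proof (uhp_r_pos e (INR n) He) as Hr.
  - unfold uhp_x; replace (1 - 2 * (e + 1) / uhp_r e (INR n) - 1)
      with (- (2 * (e + 1) / uhp_r e (INR n))) by ring.
    rewrite Rabs_Ropp; apply Hfrac; unfold uhp_r in *; try nra.
    assert (INR n + 1 <= 2 * ((e + 1) ^ 2 + INR n ^ 2)) by nra; nra.
  - unfold uhp_y; rewrite Rminus_0_r; apply Hfrac; unfold uhp_r in *; try nra.
    assert (1 + INR n ^ 2 <= (e + 1) * ((e + 1) ^ 2 + INR n ^ 2)) by nra; nra.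
Qed.

Section Interval.
Variables y1 y2 : option R.

Lemma in_I_open y : in_I y1 y2 y ->
  exists a b, a < y < b /\ forall z, a < z < b -> in_I y1 y2 z.
Proof.
  unfold in_I; intros [H1 H2].
  destruct y1 as [a |], y2 as [b |].
  - exists a, b; split; [lra | intros; lra].
  - exists a, (y + 1); split; [lra | intros; split; lra].
  - exists (y - 1), b; split; [lra | intros; split; lra].
  - exists (y - 1), (y + 1); split; [lra | intros; split; auto].
Qed.

Lemma in_I_nonempty : ext_lt y1 y2 -> exists y, in_I y1 y2 y.
Proof.
  unfold ext_lt, in_I; destruct y1 as [a |], y2 as [b |]; intros H.
  - exists ((a + b) / 2); split; lra.
  - exists (a + 1); split; [lra | auto].
  - exists (b - 1); split; [auto | lra].
  - exists 0; split; auto.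
Qed.

Lemma in_I_between a b y : in_I y1 y2 a -> in_I y1 y2 b -> a <= y <= b -> in_I y1 y2 y.
Proof.
  unfold in_I; destruct y1 as [c |], y2 as [d |]; intros [H1 H2] [H3 H4] H; split; auto; lra.
Qed.

Variable rho : R -> R.
Hypotheses (Hlim1 : tends_infty_left y1 y2 rho) (Hlim2 : tends_infty_right y1 y2 rho).

Lemma rho_sublevel_left M y0 : in_I y1 y2 y0 ->
  exists a, in_I y1 y2 a /\ a <= y0 /\ forall y, in_I y1 y2 y -> rho y <= M -> a <= y.
Proof.
  intros [H0l H0r]; specialize (Hlim1 M); destruct y1 as [c |].
  - destruct Hlim1 as [d [Hd Hcd]]; exists (Rmin (c + d) y0); split; [split | split].
    + apply Rmin_glb_lt; lra.
    + destruct y2; auto; apply Rle_lt_trans with y0; [apply Rmin_r | auto].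
    + apply Rmin_r.
    + intros y Hy Hrho; destruct (Rlt_le_dec y (c + d)) as [Hlt | Hge].
      * specialize (Hcd y Hy Hlt); lra.
      * apply Rle_trans with (c + d); [apply Rmin_l | exact Hge].
  - destruct Hlim1 as [N HN]; exists (Rmin N y0); split; [split | split]; auto.
    + destruct y2; auto; apply Rle_lt_trans with y0; [apply Rmin_r | auto].
    + apply Rmin_r.
    + intros y Hy Hrho; destruct (Rlt_le_dec y N) as [Hlt | Hge].
      * specialize (HN y Hy Hlt); lra.
      * apply Rle_trans with N; [apply Rmin_l | exact Hge].
Qed.

Lemma rho_sublevel_right M y0 : in_I y1 y2 y0 ->
  exists b, in_I y1 y2 b /\ y0 <= b /\ forall y, in_I y1 y2 y -> rho y <= M -> y <= b.
Proof.
  intros [H0l H0r]; specialize (Hlim2 M); destruct y2 as [c |].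
  - destruct Hlim2 as [d [Hd Hcd]]; exists (Rmax (c - d) y0); split; [split | split].
    + destruct y1; auto; apply Rlt_le_trans with y0; [auto | apply Rmax_r].
    + apply Rmax_lub_lt; lra.
    + apply Rmax_r.
    + intros y Hy Hrho; destruct (Rlt_le_dec (c - d) y) as [Hlt | Hge].
      * specialize (Hcd y Hy Hlt); lra.
      * apply Rle_trans with (c - d); [exact Hge | apply Rmax_l].
  - destruct Hlim2 as [N HN]; exists (Rmax N y0); split; [split | split]; auto.
    + destruct y1; auto; apply Rlt_le_trans with y0; [auto | apply Rmax_r].
    + apply Rmax_r.
    + intros y Hy Hrho; destruct (Rlt_le_dec N y) as [Hlt | Hge].
      * specialize (HN y Hy Hlt); lra.
      * apply Rle_trans with N; [exact Hge | apply Rmax_l].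
Qed.

Lemma rho_sublevel_bounded M y0 : in_I y1 y2 y0 ->
  exists a b, in_I y1 y2 a /\ in_I y1 y2 b /\ a <= y0 <= b /\
    forall y, in_I y1 y2 y -> rho y <= M -> a <= y <= b.
Proof.
  intros H0.
  destruct (rho_sublevel_left M y0 H0) as [a [Ha [Hay0 Hleft]]].
  destruct (rho_sublevel_right M y0 H0) as [b [Hb [Hby0 Hright]]].
  exists a, b; split; [exact Ha | split; [exact Hb | split; [lra |]]].
  intros y Hy Hrho; split; [apply Hleft | apply Hright]; auto.
Qed.

Lemma in_I_lim (yn : nat -> R) (y M : R) :
  (forall n, in_I y1 y2 (yn n)) -> (forall n, rho (yn n) <= M) -> is_lim_seq yn y ->
  in_I y1 y2 y.
Proof.
  intros HI HM Hy.
  destruct (rho_sublevel_bounded M (yn 0%nat) (HI 0%nat)) as [a [b [Ha [Hb [_ Hab]]]]].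
  apply (in_I_between a b); auto; split.
  - apply (is_lim_seq_le (fun _ => a) yn a y); [intro n; apply Hab; auto | apply is_lim_seq_const | exact Hy].
  - apply (is_lim_seq_le yn (fun _ => b) y b); [intro n; apply Hab; auto | exact Hy | apply is_lim_seq_const].
Qed.

End Interval.

Lemma le_ln_of_exp_le x B : exp x <= B -> x <= ln B.
Proof.
  intros Hx; destruct (Rle_lt_dec x (ln B)) as [Hle | Hlt]; [exact Hle |].
  pose proof (exp_pos x); apply exp_increasing in Hlt; rewrite exp_ln in Hlt; lra.
Qed.

Lemma c3_f_rho rho y t : c3 (f_rho rho y t) = y.
Proof. rewrite f_rho_uhp; reflexivity. Qed.

Lemma uhp_e_of_f_rho rho y t :
  uhp_e_of (c1 (f_rho rho y t)) (c2 (f_rho rho y t)) = exp (rho y).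
Proof. rewrite f_rho_uhp; apply uhp_e_of_uhp, exp_pos. Qed.

Lemma uhp_t_of_f_rho rho y t : uhp_t_of (c1 (f_rho rho y t)) (c2 (f_rho rho y t)) = t.
Proof. rewrite f_rho_uhp; apply uhp_t_of_uhp, exp_pos. Qed.

Lemma f_rho_in_H2R rho y t : H2R (f_rho rho y t).
Proof. rewrite f_rho_uhp; apply uhp_in_disk, exp_pos. Qed.

Lemma f_rho_injective rho y t y' t' : f_rho rho y t = f_rho rho y' t' -> y = y' /\ t = t'.
Proof.
  intros Heq; split.
  - rewrite <- (c3_f_rho rho y t), <- (c3_f_rho rho y' t'), Heq; reflexivity.
  - rewrite <- (uhp_t_of_f_rho rho y t), <- (uhp_t_of_f_rho rho y' t'), Heq; reflexivity.
Qed.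

Lemma f_rho_inverse_continuous rho (s : nat -> R * R) (p : R * R) :
  cv3 (fun n => f_rho rho (fst (s n)) (snd (s n))) (f_rho rho (fst p) (snd p)) -> cv2 s p.
Proof.
  rewrite cv3_is_lim_seq, cv2_is_lim_seq; intros [H1 [H2 H3]]; split.
  - rewrite c3_f_rho in H3; apply (is_lim_seq_ext _ _ _ (fun n => c3_f_rho rho _ _) H3).
  - rewrite <- (uhp_t_of_f_rho rho (fst p) (snd p)).
    apply (is_lim_seq_ext _ _ _ (fun n => uhp_t_of_f_rho rho (fst (s n)) _)).
    apply is_lim_seq_uhp_t_of; auto.
    apply Rgt_not_eq, disk_den_pos, f_rho_in_H2R.
Qed.

Lemma vplane_closed th1 th2 (q : nat -> P3) (l : P3) :
  (forall n, vplane th1 th2 (q n)) -> cv3 q l -> H2R l -> vplane th1 th2 l.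
Proof.
  rewrite cv3_is_lim_seq; intros Hq [H1 [H2 _]] Hl.
  destruct th1 as [a1 a2], th2 as [b1 b2]; unfold vplane, geodesic in *; cbn [fst snd] in *.
  split; [exact Hl |]; apply Rminus_diag_uniq.
  apply (is_lim_seq_unique_R (fun n =>
    (a1 * b2 - a2 * b1) * (c1 (q n) ^ 2 + c2 (q n) ^ 2 + 1)
    - 2 * (- c1 (q n) * (a2 - b2) + c2 (q n) * (a1 - b1)))).
  - is_lim_seq_arith.
  - apply (is_lim_seq_ext (fun _ => 0)); [intro n; rewrite (proj2 (Hq n)); ring |].
    apply is_lim_seq_const.
Qed.

Section Surface.
Variables (y1 y2 : option R) (rho : R -> R) (D : nat -> R -> R).
Hypothesis rho_D0 : forall y, in_I y1 y2 y -> D 0%nat y = rho y.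
Hypothesis D_derive : forall n y, in_I y1 y2 y -> derivable_pt_lim (D n) y (D (S n) y).

Lemma exp_rho_derive y : in_I y1 y2 y ->
  derivable_pt_lim (fun s => exp (rho s)) y (exp (rho y) * D 1%nat y).
Proof.
  intros Hy; destruct (in_I_open y1 y2 y Hy) as [a [b [Hab Hsub]]].
  apply (derivable_pt_lim_locally_ext (fun s => exp (D 0%nat s)) _ y a b _ Hab).
  - intros z Hz; rewrite rho_D0; auto.
  - rewrite <- (rho_D0 y Hy).
    apply (derivable_pt_lim_comp (D 0%nat) exp); [apply D_derive, Hy | apply derivable_pt_lim_exp].
Qed.

Lemma derive_along_exp_rho (h : R -> R) dh y : in_I y1 y2 y ->
  derivable_pt_lim h (exp (rho y)) dh ->
  derivable_pt_lim (fun s => h (exp (rho s))) y (exp (rho y) * D 1%nat y * dh).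
Proof.
  intros Hy Hh; rewrite Rmult_comm.
  apply (derivable_pt_lim_comp (fun s => exp (rho s)) h); auto.
  apply exp_rho_derive, Hy.
Qed.

Lemma derive_along_exp_rho_scaled (h dh : R -> R) y : in_I y1 y2 y ->
  derivable_pt_lim h (exp (rho y)) (dh (exp (rho y))) ->
  derivable_pt_lim (fun s => exp (rho s) * D 1%nat s * h (exp (rho s))) y
    ((exp (rho y) * D 1%nat y) ^ 2 * dh (exp (rho y))
     + exp (rho y) * (D 1%nat y ^ 2 + D 2%nat y) * h (exp (rho y))).
Proof.
  intros Hy Hh.
  set (e := exp (rho y)); set (d1 := D 1%nat y); set (d2 := D 2%nat y).
  replace ((e * d1) ^ 2 * dh e + e * (d1 ^ 2 + d2) * h e)
    with ((e * d1 * d1 + e * d2) * h e + e * d1 * (e * d1 * dh e)) by ring.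
  apply (derivable_pt_lim_mult (fun s => exp (rho s) * D 1%nat s) (fun s => h (exp (rho s)))).
  - apply (derivable_pt_lim_mult (fun s => exp (rho s)) (D 1%nat));
      [apply exp_rho_derive, Hy | apply D_derive, Hy].
  - apply derive_along_exp_rho; assumption.
Qed.

Lemma f_rho_first_derivatives y t : in_I y1 y2 y ->
  vderiv3 (fun s => f_rho rho s t) y (f_y (exp (rho y)) t (D 1%nat y)) /\
  vderiv3 (fun s => f_rho rho y s) t (f_t (exp (rho y)) t).
Proof.
  intros Hy; pose proof (exp_pos (rho y)) as He.
  rewrite f_rho_uhp; unfold vderiv3, uhp, f_y, f_t; unfold_coords.
  repeat split.
  - apply (derive_along_exp_rho (fun e => uhp_x e t)), uhp_x_derive_e; auto.
  - apply (derive_along_exp_rho (fun e => uhp_y e t)), uhp_y_derive_e; auto.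
  - apply derivable_pt_lim_id.
  - apply uhp_x_derive_t, He.
  - apply uhp_y_derive_t, He.
  - apply derivable_pt_lim_const.
Qed.

Lemma f_rho_second_derivatives y t : in_I y1 y2 y ->
  vderiv3 (fun s => f_y (exp (rho s)) t (D 1%nat s)) y
    (f_yy (exp (rho y)) t (D 1%nat y) (D 2%nat y)) /\
  vderiv3 (fun s => f_y (exp (rho y)) s (D 1%nat y)) t (f_yt (exp (rho y)) t (D 1%nat y)) /\
  vderiv3 (fun s => f_t (exp (rho y)) s) t (f_tt (exp (rho y)) t).
Proof.
  intros Hy; pose proof (exp_pos (rho y)) as He.
  unfold vderiv3, f_y, f_t, f_yy, f_yt, f_tt; unfold_coords.
  repeat split; try apply derivable_pt_lim_const.
  - apply (derive_along_exp_rho_scaled (fun e => uhp_x_e e t) (fun e => uhp_x_ee e t));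
      [exact Hy | apply uhp_x_e_derive_e, He].
  - apply (derive_along_exp_rho_scaled (fun e => uhp_y_e e t) (fun e => uhp_y_ee e t));
      [exact Hy | apply uhp_y_e_derive_e, He].
  - rewrite Ropp_mult_distr_r; apply derivable_pt_lim_scal, uhp_x_e_derive_t, He.
  - apply derivable_pt_lim_scal, uhp_y_e_derive_t, He.
  - apply (derivable_pt_lim_opp (fun s => uhp_y_e (exp (rho y)) s)), uhp_y_e_derive_t, He.
  - apply uhp_x_e_derive_t, He.
Qed.

Lemma f_rho_curvature :
  has_extrinsic_curvature (fun y _ => in_I y1 y2 y) (f_rho rho)
    (fun y _ => D 2%nat y / (1 + D 1%nat y ^ 2) ^ 2).
Proof.
  exists (fun y t => f_y (exp (rho y)) t (D 1%nat y)), (fun y t => f_t (exp (rho y)) t),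
    (fun y t => f_yy (exp (rho y)) t (D 1%nat y) (D 2%nat y)),
    (fun y t => f_yt (exp (rho y)) t (D 1%nat y)), (fun y t => f_tt (exp (rho y)) t).
  intros y t Hy.
  destruct (f_rho_first_derivatives y t Hy) as [Hfy Hft].
  destruct (f_rho_second_derivatives y t Hy) as [Hfyy [Hfyt Hftt]].
  do 5 (split; [assumption |]); cbv zeta.
  pose proof (exp_pos (rho y)) as He; rewrite f_rho_uhp.
  set (e := exp (rho y)) in *; set (d1 := D 1%nat y); set (d2 := D 2%nat y).
  rewrite first_form_E, first_form_F, first_form_G by exact He.
  assert (Hd1 : 0 < 1 + d1 ^ 2) by nra.
  assert (He2 : 0 < e ^ 2) by nra.
  split.
  - replace ((1 + d1 ^ 2) * (1 / e ^ 2) - 0 ^ 2) with ((1 + d1 ^ 2) / e ^ 2) by (field; lra).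
    apply Rgt_not_eq, Rdiv_lt_0_compat; assumption.
  - set (s := sqrt (1 + d1 ^ 2)).
    assert (Hs : s * s = 1 + d1 ^ 2) by (apply sqrt_sqrt; lra).
    assert (Hs0 : 0 < s) by (apply sqrt_lt_R0; lra).
    exists (scale3 (1 / s) (f_normal e t d1)).
    rewrite !gm_scale_l, !gm_scale_r, gm_f_normal, f_normal_orth_y, f_normal_orth_t by exact He.
    rewrite second_form_L, second_form_M, second_form_N by exact He.
    repeat split; try ring; rewrite <- Hs; field; lra.
Qed.

Lemma exp_rho_continuous y : in_I y1 y2 y -> continuity_pt (fun s => exp (rho s)) y.
Proof. intros Hy; apply derivable_continuous_pt; eexists; apply exp_rho_derive, Hy. Qed.

Lemma is_lim_seq_f_rho (yn tn : nat -> R) (y t : R) :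
  in_I y1 y2 y -> is_lim_seq yn y -> is_lim_seq tn t ->
  cv3 (fun n => f_rho rho (yn n) (tn n)) (f_rho rho y t).
Proof.
  intros Hy Hyn Htn; rewrite f_rho_uhp, cv3_is_lim_seq; unfold uhp; unfold_coords.
  assert (He : is_lim_seq (fun n => exp (rho (yn n))) (exp (rho y)))
    by (apply (is_lim_seq_continuous (fun s => exp (rho s))); auto; apply exp_rho_continuous, Hy).
  repeat split; auto; [apply is_lim_seq_uhp_x | apply is_lim_seq_uhp_y]; auto; apply exp_pos.
Qed.

Hypothesis Hy : ext_lt y1 y2.
Hypotheses (Hlim1 : tends_infty_left y1 y2 rho) (Hlim2 : tends_infty_right y1 y2 rho).

Lemma in_I_lim_exp (yn : nat -> R) (y M : R) :
  (forall n, in_I y1 y2 (yn n)) -> (forall n, exp (rho (yn n)) <= M) -> is_lim_seq yn y ->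
  in_I y1 y2 y.
Proof.
  intros HI HM; apply (in_I_lim y1 y2 rho Hlim1 Hlim2 yn y (ln M) HI).
  intro n; apply le_ln_of_exp_le, HM.
Qed.

(* The sublevel set [rho <= rho y0] lies in a compact subinterval, on which the
   continuous [exp o rho] attains a positive minimum. *)
Lemma exp_rho_lower_bound : exists m, 0 < m /\ forall y, in_I y1 y2 y -> m <= exp (rho y).
Proof.
  destruct (in_I_nonempty y1 y2 Hy) as [y0 H0].
  destruct (rho_sublevel_bounded y1 y2 rho Hlim1 Hlim2 (rho y0) y0 H0)
    as [a [b [Ha [Hb [Hab Hsub]]]]].
  destruct (continuity_ab_min (fun s => exp (rho s)) a b) as [ymin [Hmin _]]; [lra | |].
  { intros c Hc; apply exp_rho_continuous, (in_I_between y1 y2 a b); auto. }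
  exists (Rmin (exp (rho ymin)) (exp (rho y0))); split.
  - apply Rmin_glb_lt; apply exp_pos.
  - intros y HyI; destruct (Rle_lt_dec (rho y) (rho y0)) as [Hle | Hlt].
    + apply Rle_trans with (exp (rho ymin)); [apply Rmin_l | apply Hmin, Hsub; auto].
    + apply Rle_trans with (exp (rho y0)); [apply Rmin_r | left; apply exp_increasing, Hlt].
Qed.

Lemma f_rho_proper (A : P3 -> Prop) : (forall q, A q -> H2R q) -> compact3 A ->
  compact2 (fun p => in_I y1 y2 (fst p) /\ A (f_rho rho (fst p) (snd p))).
Proof.
  intros HA HC s Hs.
  destruct (HC (fun n => f_rho rho (fst (s n)) (snd (s n)))) as [phi [a [Hphi [Ha Hcv]]]];
    [intro n; apply Hs |].
  set (yn := fun n => fst (s (phi n))); set (tn := fun n => snd (s (phi n))).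
  assert (Hcv' := Hcv); rewrite cv3_is_lim_seq in Hcv'; destruct Hcv' as [H1 [H2 H3]].
  assert (Hden : disk_den (c1 a) (c2 a) <> 0) by apply Rgt_not_eq, disk_den_pos, HA, Ha.
  assert (Hyn : is_lim_seq yn (c3 a))
    by apply (is_lim_seq_ext _ _ _ (fun n => c3_f_rho rho (yn n) (tn n)) H3).
  assert (Htn : is_lim_seq tn (uhp_t_of (c1 a) (c2 a))).
  { apply (is_lim_seq_ext _ _ _ (fun n => uhp_t_of_f_rho rho (yn n) (tn n))).
    apply is_lim_seq_uhp_t_of; auto. }
  assert (Hen : is_lim_seq (fun n => exp (rho (yn n))) (uhp_e_of (c1 a) (c2 a))).
  { apply (is_lim_seq_ext _ _ _ (fun n => uhp_e_of_f_rho rho (yn n) (tn n))).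
    apply is_lim_seq_uhp_e_of; auto. }
  destruct (maj_by_pos _ (exist _ _ (proj1 (is_lim_seq_Reals _ _) Hen))) as [M [_ HM]].
  assert (HyI : in_I y1 y2 (c3 a)).
  { apply (in_I_lim_exp yn _ M); auto; [intro n; apply Hs |].
    intro n; specialize (HM n); rewrite Rabs_right in HM; auto.
    apply Rle_ge, Rlt_le, exp_pos. }
  exists phi, (c3 a, uhp_t_of (c1 a) (c2 a)); split; [exact Hphi | split].
  - split; [exact HyI |]; cbn [fst snd].
    rewrite <- (cv3_unique _ _ _ Hcv (is_lim_seq_f_rho yn tn _ _ HyI Hyn Htn)); exact Ha.
  - apply cv2_is_lim_seq; split; assumption.
Qed.

Lemma f_rho_properly_embedded : properly_embedded (fun y _ => in_I y1 y2 y) (f_rho rho).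
Proof.
  split; [| split; [| split; [| split]]].
  - intros; apply f_rho_in_H2R.
  - intros y t y' t' _ _; apply f_rho_injective.
  - exists (fun y t => f_y (exp (rho y)) t (D 1%nat y)), (fun y t => f_t (exp (rho y)) t).
    intros y t HyI; destruct (f_rho_first_derivatives y t HyI) as [Hfy Hft].
    split; [exact Hfy | split; [exact Hft | apply linindep_f_y_f_t, exp_pos]].
  - intros s p _ _; apply f_rho_inverse_continuous.
  - exact f_rho_proper.
Qed.

Lemma f_rho_asym_boundary th :
  asym_boundary (fun p => exists q, image (fun y _ => in_I y1 y2 y) (f_rho rho) q /\ (c1 q, c2 q) = p) th
  <-> th = (1, 0).
Proof.
  split.
  - intros [Hth [s [Hs Hcv]]]; destruct th as [X Y]; unfold on_circle in Hth; cbn [fst snd] in Hth.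
    destruct (Req_dec X 1) as [HX | HX]; [subst X; f_equal; nra | exfalso].
    (* Off [(1, 0)], the circle is the horizon [e = 0], but [e] stays above [m > 0]. *)
    destruct (uhp_e_of_circle X Y Hth HX) as [Hden He0].
    destruct exp_rho_lower_bound as [m [Hm Hlow]].
    rewrite cv2_is_lim_seq in Hcv; destruct Hcv as [HsX HsY]; cbn [fst snd] in HsX, HsY.
    pose proof (is_lim_seq_uhp_e_of _ _ _ _ HsX HsY Hden) as Hlim; rewrite He0 in Hlim.
    assert (Hge : forall n, m <= uhp_e_of (fst (s n)) (snd (s n))).
    { intro n; destruct (Hs n) as [q [[y [t [HyI Hq]]] Hp]]; subst q; rewrite <- Hp.
      cbn [fst snd]; rewrite uhp_e_of_f_rho; apply Hlow, HyI. }
    pose proof (is_lim_seq_le _ _ m 0 Hge (is_lim_seq_const m) Hlim); simpl in *; lra.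
  - intros ->; split; [unfold on_circle; simpl; ring |].
    destruct (in_I_nonempty y1 y2 Hy) as [y0 H0].
    exists (fun n => (c1 (f_rho rho y0 (INR n)), c2 (f_rho rho y0 (INR n)))); split.
    + intro n; eexists; split; [exists y0, (INR n); split; [exact H0 | reflexivity] | reflexivity].
    + rewrite cv2_is_lim_seq, f_rho_uhp; exact (horocycle_tends_to_end _ (exp_pos (rho y0))).
Qed.

Lemma f_rho_vplane_compact th1 th2 : on_circle th1 -> on_circle th2 ->
  th1 <> (1, 0) -> th2 <> (1, 0) -> th1 <> th2 ->
  compact3 (fun q => image (fun y _ => in_I y1 y2 y) (f_rho rho) q /\ vplane th1 th2 q).
Proof.
  intros Hc1 Hc2 Hn1 Hn2 Hn12 q Hq.
  destruct (vplane_uhp_bounded th1 th2 Hc1 Hc2 Hn1 Hn2 Hn12) as [B HB].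
  destruct (functional_choice (fun n p => in_I y1 y2 (fst p) /\ f_rho rho (fst p) (snd p) = q n))
    as [s Hs].
  { intro n; destruct (Hq n) as [[y [t [HyI Hf]]] _]; exists (y, t); auto. }
  set (yn := fun n => fst (s n)); set (tn := fun n => snd (s n)).
  assert (HyI : forall n, in_I y1 y2 (yn n)) by (intro n; apply Hs).
  assert (Hbound : forall n, exp (rho (yn n)) + 1 <= B /\ Rabs (tn n) <= B).
  { intro n; apply (HB _ _ (yn n)); [apply exp_pos |].
    destruct (Hs n) as [_ Hf]; fold (yn n) (tn n) in Hf.
    rewrite f_rho_uhp in Hf; rewrite Hf; apply Hq. }
  assert (Hexp : forall n, exp (rho (yn n)) <= B) by (intro n; pose proof (Hbound n); lra).
  destruct (rho_sublevel_bounded y1 y2 rho Hlim1 Hlim2 (ln B) (yn 0%nat) (HyI 0%nat))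
    as [a [b [_ [_ [_ Hab]]]]].
  destruct (bounded_subseq_cv2 yn tn a b (- B) B) as [phi [l1 [l2 [Hphi [L1 L2]]]]].
  { intro n; apply Hab; [apply HyI | apply le_ln_of_exp_le, Hexp]. }
  { intro n; apply Rabs_le_between, Hbound. }
  assert (Hl1 : in_I y1 y2 l1)
    by (apply (in_I_lim_exp (fun n => yn (phi n)) l1 B); auto).
  assert (Hcv : cv3 (fun n => q (phi n)) (f_rho rho l1 l2)).
  { replace (fun n => q (phi n)) with (fun n => f_rho rho (yn (phi n)) (tn (phi n))).
    - exact (is_lim_seq_f_rho _ _ _ _ Hl1 L1 L2).
    - extensionality n; apply Hs. }
  exists phi, (f_rho rho l1 l2); split; [exact Hphi | split; [split | exact Hcv]].
  - exists l1, l2; split; [exact Hl1 | reflexivity].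
  - apply (vplane_closed th1 th2 (fun n => q (phi n))); [intro n; apply Hq | exact Hcv |].
    apply f_rho_in_H2R.
Qed.

Lemma f_rho_simple_end : simple_end (fun y _ => in_I y1 y2 y) (f_rho rho).
Proof.
  exists (1, 0); split; [exact f_rho_asym_boundary |].
  intros; right; apply f_rho_vplane_compact; assumption.
Qed.

End Surface.

Theorem proposition4p1 (y1 y2 : option R) (Hy : ext_lt y1 y2)
  (rho : R -> R) (D : nat -> R -> R)
  (HD0 : forall y, in_I y1 y2 y -> D 0%nat y = rho y)
  (HD : forall (n : nat) (y : R), in_I y1 y2 y ->
          derivable_pt_lim (D n) y (D (S n) y))
  (Hconvex : forall y, in_I y1 y2 y -> 0 < D 2%nat y)
  (Hlim1 : tends_infty_left y1 y2 rho)
  (Hlim2 : tends_infty_right y1 y2 rho) :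
  let Dom := fun y t : R => in_I y1 y2 y in
  has_extrinsic_curvature Dom (f_rho rho)
    (fun y t => D 2%nat y / (1 + D 1%nat y ^ 2) ^ 2) /\
  (forall y t, Dom y t -> 0 < D 2%nat y / (1 + D 1%nat y ^ 2) ^ 2) /\
  properly_embedded Dom (f_rho rho) /\
  simple_end Dom (f_rho rho).
Proof.
  cbv zeta; split; [| split; [| split]].
  - exact (f_rho_curvature y1 y2 rho D HD0 HD).
  - intros y t HyI; apply Rdiv_lt_0_compat; [apply Hconvex, HyI | apply pow_lt; nra].
  - exact (f_rho_properly_embedded y1 y2 rho D HD0 HD Hlim1 Hlim2).
  - exact (f_rho_simple_end y1 y2 rho D HD0 HD Hy Hlim1 Hlim2).
Qed.
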